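(* Let $p$ be a prime, let $\alpha,\beta\ge1$ be integers, and let $B$ be a commutative group of exponent $p^\beta$. Then $$\delta(\mathbb{Z}/p^\alpha\mathbb{Z},B)=(\beta(p-1)+1)p^{\alpha-1}-1.$$ Equivalently, the nilpotency index of the augmentation ideal of $(\mathbb{Z}/p^\beta\mathbb{Z})[\mathbb{Z}/p^\alpha\mathbb{Z}]$ is $(\beta(p-1)+1)p^{\alpha-1}$.
   Context: For commutative groups $A,B$, $B^A$ denotes the commutative group (under pointwise addition) of all maps $A\to B$. For $a\in A$, the difference operator $\Delta_a:B^A\to B^A$ is $(\Delta_a f)(x)=f(x+a)-f(x)$. Let $\widetilde{\mathbb N}=\mathbb N\cup\{-\infty,\infty\}$ ($\mathbb N=\{0,1,2,\dots\}$), totally ordered with $-\infty$ least and $\infty$ greatest. The functional degree $\operatorname{fdeg}(f)\in\widetilde{\mathbb N}$ of $f\in B^A$ is: $-\infty$ if $f=0$; otherwise the least $n\in\mathbb N$ such that $\Delta_{a_1}\cdots\Delta_{a_{n+1}}f=0$ for all $a_1,\dots,a_{n+1}\in A$; and $\infty$ if no such $n$ exists. Define $\delta(A,B)=\sup\{\operatorname{fdeg}(f): f\in B^A\}$. For a commutative ring $R$ and group $A$, the augmentation ideal of the group ring $R[A]$ is the kernel of $\sum r_a[a]\mapsto\sum r_a$; the nilpotency index of an ideal $I$ is the least $n\in\mathbb N$ with $I^n=0$, or $\infty$ if none exists. *)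

From HB Require Import structures.
From mathcomp Require Import all_boot all_order all_algebra.
Set Implicit Arguments. Unset Strict Implicit. Unset Printing Implicit Defensive.
Import GRing.Theory.
Local Open Scope ring_scope.

Inductive natinf := NegInf | Fin of nat | PosInf.

Definition natinf_le (x y : natinf) : Prop :=
  match x, y with
  | NegInf, _ => True
  | _, PosInf => True
  | Fin m, Fin n => (m <= n)%N
  | _, _ => False
  end.

Definition Delta (A B : zmodType) (a : A) (f : A -> B) : A -> B :=
  fun x => f (x + a) - f x.

Definition iterDelta (A B : zmodType) (s : seq A) (f : A -> B) : A -> B :=
  foldr (@Delta A B) f s.

Definition vanishes_at (A B : zmodType) (f : A -> B) (n : nat) : Prop :=
  forall s : seq A, size s = n.+1 -> forall x, iterDelta s f x = 0.

Definition fdeg_is (A B : zmodType) (f : A -> B) (d : natinf) : Prop :=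
  match d with
  | NegInf => forall x, f x = 0
  | Fin n => (exists x, f x <> 0) /\ vanishes_at f n /\
             (forall m, vanishes_at f m -> (n <= m)%N)
  | PosInf => (exists x, f x <> 0) /\ (forall n, ~ vanishes_at f n)
  end.

Definition delta_is (A B : zmodType) (d : natinf) : Prop :=
  (forall (f : A -> B) e, fdeg_is f e -> natinf_le e d) /\
  (forall u, (forall (f : A -> B) e, fdeg_is f e -> natinf_le e u) -> natinf_le d u).

Definition has_exponent (B : zmodType) (n : nat) : Prop :=
  (0 < n)%N /\ (forall b : B, b *+ n = 0) /\
  (forall m, (0 < m)%N -> (forall b : B, b *+ m = 0) -> (n <= m)%N).

From mathcomp Require Import all_boot all_order all_algebra.
From mathcomp Require Import zify ring.
From Stdlib Require Import Classical.

(* Let q = p^alpha, q' = p^(alpha-1) and phi = (p-1) q', so that q = phi + q'.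
   On Z/q every Delta_a is a combination of powers of Delta := Delta_1, and
   since translation by q is the identity, (1 + Delta)^q = 1.  Hence
   Delta^n = sum_(k<q) c_(n,k) Delta^k, where c_(n,k) are the coordinates of
   t^n in Z[t]/((1+t)^q - 1).  Give p^e t^k the weight e phi + k.  As p divides
   C(q,k) for 0 < k < q, and p^2 does for 0 < k < q', the relation
   t^q = - sum_(0<k<q) C(q,k) t^k has weight >= q, so t^n has weight >= n;
   for n = beta phi + q' every c_(n,k) is divisible by p^beta and Delta^n kills
   B^(Z/q).  Conversely, C(q,q') t^q', where C(q,q') = p w with p coprime to w,
   is the only term of weight exactly q, so for q' <= r < q the leading term of t^(e phi + r) is
   (-C(q,q'))^e t^r.  At n = (beta-1) phi + q - 1 the coefficient of t^(q-1) is
   +-p^(beta-1) w^(beta-1) mod p^beta, and Delta^n does not vanish on b times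
   the indicator of q - 1 as soon as p^(beta-1) b <> 0. *)

Set Implicit Arguments. Unset Strict Implicit. Unset Printing Implicit Defensive.

Section PrimePowerBinomials.
Variables (p a : nat).
Hypothesis p_pr : prime p.

Lemma logn_lt_exp k j : 0 < k < p ^ j -> logn p k < j.
Proof.
move=> /andP[k_gt0 kj]; rewrite -(ltn_exp2l _ _ (prime_gt1 p_pr)) -p_part.
exact: leq_ltn_trans (dvdn_leq k_gt0 (dvdn_part _ _)) kj.
Qed.

Lemma pfactor_dvdn_bin_exp k : 0 < k <= p ^ a -> p ^ (a - logn p k) %| 'C(p ^ a, k).
Proof.
move=> /andP[k_gt0 ka].
have kE : k = p ^ logn p k * k`_p^' by rewrite -p_part partnC.
have cop : coprime p k`_p^'.
  by have := coprime_partC p p k; rewrite part_pnat_id // pnat_id.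
have logk : logn p k <= a.
  rewrite -(leq_exp2l _ _ (prime_gt1 p_pr)) -p_part.
  exact: leq_trans (dvdn_leq k_gt0 (dvdn_part _ _)) ka.
have : p ^ a %| p ^ a * 'C((p ^ a).-1, k.-1) by apply: dvdn_mulr.
rewrite mul_bin_diag prednK //.
rewrite {1}kE -mulnA -{1}(subnKC logk) expnD dvdn_pmul2l ?expn_gt0 ?prime_gt0 //.
by rewrite Gauss_dvdr // coprimeXl.
Qed.

Lemma prime_dvd_bin_exp k : 0 < k < p ^ a -> p %| 'C(p ^ a, k).
Proof.
move=> /[dup] /logn_lt_exp logk /andP[k_gt0 /ltnW ka].
apply: dvdn_trans (pfactor_dvdn_bin_exp _); last by rewrite k_gt0.
by rewrite -{1}(expn1 p) dvdn_exp2l // subn_gt0.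
Qed.

Lemma prime_sq_dvd_bin_exp k : 0 < k < p ^ (a - 1) -> p ^ 2 %| 'C(p ^ a, k).
Proof.
move=> /[dup] /logn_lt_exp logk /andP[k_gt0 ka].
apply: dvdn_trans (pfactor_dvdn_bin_exp _); last first.
  rewrite k_gt0 (leq_trans (ltnW ka)) // leq_exp2l ?prime_gt1 //; lia.
rewrite dvdn_exp2l //; lia.
Qed.

Lemma prime_ndvd_bin_exp_pred j : j < p ^ a -> ~~ (p %| 'C((p ^ a).-1, j)).
Proof.
have pa_gt0 : 0 < p ^ a by rewrite expn_gt0 prime_gt0.
elim: j => [|j IH] ja.
  by rewrite bin0 dvdn1; apply/eqP => p1; move: p_pr; rewrite p1.
have := @prime_dvd_bin_exp j.+1; rewrite ja => /(_ isT).
rewrite -{1}(prednK pa_gt0) binS; apply: contraL => pj.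
by rewrite dvdn_addr // (negbTE (IH (ltnW ja))).
Qed.

Lemma bin_exp_exp_pred : 0 < a ->
  'C(p ^ a, p ^ (a - 1)) = p * 'C((p ^ a).-1, (p ^ (a - 1)).-1).
Proof.
move=> a_gt0; have p_gt0 := prime_gt0 p_pr.
have pa1_gt0 : 0 < p ^ (a - 1) by rewrite expn_gt0 p_gt0.
have paE : p ^ a = p * p ^ (a - 1) by rewrite -expnS subn1 prednK.
apply/eqP; rewrite -(eqn_pmul2l pa1_gt0).
have := mul_bin_diag (p ^ a) (p ^ (a - 1)).-1; rewrite prednK // => <-.
by rewrite {1}paE -mulnA mulnCA.
Qed.

End PrimePowerBinomials.

Import GRing.Theory.
Local Open Scope ring_scope.

Section FiniteDifferences.
Variables A B : zmodType.
Implicit Types (f g : A -> B) (s : seq A) (u : A).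

Lemma eq_iterDelta s f g : f =1 g -> iterDelta s f =1 iterDelta s g.
Proof. by move=> fg; elim: s => [|a s IH] x //=; rewrite /Delta !IH. Qed.

Lemma iterDelta_sum s m (G : nat -> A -> B) x :
  iterDelta s (fun y => \sum_(j < m) G j y) x = \sum_(j < m) iterDelta s (G j) x.
Proof. by elim: s x => [//|a s IH] x /=; rewrite /Delta !IH -sumrB. Qed.

Lemma iterDelta_translate s c f x :
  iterDelta s (fun y => f (y + c)) x = iterDelta s f (x + c).
Proof. by elim: s x => [//|a s IH] x /=; rewrite /Delta !IH addrAC. Qed.

Lemma iterDelta_nseq u n f : iterDelta (nseq n u) f = iter n (Delta u) f.
Proof. by elim: n => //= n ->. Qed.

Lemma Delta_mulrn u m f x :
  Delta (u *+ m) f x = \sum_(j < m) Delta u f (x + u *+ j).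
Proof.
elim: m => [|m IH]; first by rewrite big_ord0 /Delta mulr0n addr0 subrr.
by rewrite big_ord_recr /= -IH /Delta mulrSr addrA [RHS]addrC addrA subrK.
Qed.

Lemma iterDelta_generated u : (forall a, exists m, a = u *+ m) ->
  forall s f, (forall y, iter (size s) (Delta u) f y = 0) ->
  forall x, iterDelta s f x = 0.
Proof.
move=> gen; elim/last_ind => [|s a IH] f Df x; first exact: Df.
have [m ->] := gen a.
rewrite /iterDelta foldr_rcons -/(iterDelta s _).
rewrite (eq_iterDelta s (Delta_mulrn u m f)).
rewrite (iterDelta_sum s m (fun j y => Delta u f (y + u *+ j))).
apply: big1 => j _; rewrite iterDelta_translate IH // => y.
by have := Df y; rewrite size_rcons iterSr.
Qed.

Lemma newton_forward u n f y :
  f (y + u *+ n) = \sum_(k < n.+1) iter k (Delta u) f y *+ 'C(n, k).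
Proof.
elim: n f => [|n IH] f.
  by rewrite big_ord_recl big_ord0 mulr0n !addr0 /= mulr1n.
have -> : f (y + u *+ n.+1) = f (y + u *+ n) + Delta u f (y + u *+ n).
  by rewrite /Delta mulrSr addrA [RHS]addrC subrK.
rewrite (IH f) (IH (Delta u f)) [in RHS]big_ord_recl /= bin0 mulr1n.
under [in RHS]eq_bigr => i _ do rewrite add0n binS mulrnDr.
rewrite big_split /= addrA; congr (_ + _); last by apply: eq_bigr => i _; rewrite -iterSr.
rewrite big_ord_recl /= bin0 mulr1n; congr (_ + _).
rewrite [in RHS]big_ord_recr /= bin_small // mulr0n addr0.
by apply: eq_bigr => i _; rewrite add0n.
Qed.

Lemma iter_Delta_first u n f y :
  (forall j, (j < n)%N -> f (y + u *+ j) = 0) ->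
  (forall j, (j < n)%N -> iter j (Delta u) f y = 0) /\
  iter n (Delta u) f y = f (y + u *+ n).
Proof.
move=> f0.
have first j : (j <= n)%N -> iter j (Delta u) f y = f (y + u *+ j).
  elim/ltn_ind: j => j IH jn; rewrite newton_forward big_ord_recr /= binn mulr1n.
  rewrite big1 ?add0r // => i _.
  by move: (ltn_ord i) => ilt; rewrite IH ?f0 ?mul0rn //; lia.
split=> [j jn|]; last exact: first.
by rewrite first ?f0 // ltnW.
Qed.

Lemma vanishes_atS f m : vanishes_at f m -> vanishes_at f m.+1.
Proof. by move=> Vf [//|a s] /= [hs] x; rewrite /Delta !Vf ?subrr. Qed.

Lemma vanishes_at_leq f m n : vanishes_at f m -> (m <= n)%N -> vanishes_at f n.
Proof.
move=> Vf /subnK <-; elim: (n - m)%N => //= d IH.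
by rewrite addSn; exact: vanishes_atS.
Qed.

Lemma iterDelta_eq0 s f : (forall x, f x = 0) -> forall x, iterDelta s f x = 0.
Proof. by move=> f0; elim: s => [|a s IH] x //=; rewrite /Delta !IH subrr. Qed.

Lemma fdeg_is_Fin f n s x :
  vanishes_at f n -> size s = n -> iterDelta s f x != 0 -> fdeg_is f (Fin n).
Proof.
move=> Vf sn fs; split; [|split=> // m Vm].
  apply: NNPP => nf; move: fs; rewrite iterDelta_eq0 ?eqxx // => y.
  exact: (not_ex_not_all _ _ nf).
rewrite leqNgt; apply/negP => mn.
have Vn1 : vanishes_at f n.-1 by apply: vanishes_at_leq Vm _; lia.
by move: fs; rewrite Vn1 ?eqxx // sn prednK //; lia.
Qed.

Lemma delta_is_Fin n (f0 : A -> B) :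
  (forall f : A -> B, vanishes_at f n) -> fdeg_is f0 (Fin n) -> delta_is A B (Fin n).
Proof.
move=> Vn f0n; split=> [f [|m|] //= | u ub]; last exact: ub f0n.
- by case=> _ [_]; apply; exact: Vn.
- by case=> _ /(_ _ (Vn f)).
Qed.

End FiniteDifferences.

(* [pow_coef q n k] is the coefficient of t^k in t^n reduced modulo the monic
   polynomial (1 + t)^q - 1 = t^q + sum_(0<k<q) C(q,k) t^k, and [shift_coef q]
   is multiplication by t; [Delta u] plays the role of t when [u *+ q = 0]. *)
Definition unit_coef (r : nat) : nat -> int := fun k => (k == r)%:Z.

Definition rel_coef (q k : nat) : int := if k is 0 then 0 else 'C(q, k)%:Z.

Definition shift_coef (q : nat) (c : nat -> int) : nat -> int :=
  fun k => (if k is k'.+1 then c k' else 0) - c q.-1 * rel_coef q k.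

Definition pow_coef (q n : nat) : nat -> int := iter n (shift_coef q) (unit_coef 0).

Lemma shift_coefB q c z d k :
  shift_coef q (c \- z \*o d) k = shift_coef q c k - z * shift_coef q d k.
Proof. by case: k => [|k] /=; rewrite /shift_coef /=; ring. Qed.

Lemma shift_unit_coef q r : (r.+1 < q)%N ->
  shift_coef q (unit_coef r) =1 unit_coef r.+1.
Proof.
move=> rq [|k]; rewrite /shift_coef /unit_coef /= ?mulr0 ?subr0 //.
have -> : (q.-1 == r) = false by apply/eqP; lia.
by rewrite mul0r subr0.
Qed.

Lemma shift_unit_coef_last q k : (k < q)%N ->
  shift_coef q (unit_coef q.-1) k = - rel_coef q k.
Proof.
move=> kq; rewrite /shift_coef /unit_coef eqxx mul1r.
case: k kq => [|k] kq /=; first by rewrite subr0 oppr0.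
have -> : (k == q.-1) = false by apply/eqP; lia.
by rewrite sub0r.
Qed.

Lemma eq_shift_coef q c d : c =1 d -> shift_coef q c =1 shift_coef q d.
Proof. by move=> cd [|k]; rewrite /shift_coef !cd. Qed.

Lemma pow_coef_small q n : (n < q)%N -> pow_coef q n =1 unit_coef n.
Proof.
elim: n => [//|n IH] nq k.
by rewrite /pow_coef iterS (eq_shift_coef _ (IH (ltnW nq))) shift_unit_coef.
Qed.

Section CyclicDifferences.
Variables (A B : zmodType) (u : A) (Q : nat).
Hypothesis uQ : u *+ Q.+1 = 0.
Implicit Type f : A -> B.

Lemma iter_Delta_order f y :
  iter Q.+1 (Delta u) f y =
  - \sum_(k < Q.+1) iter k (Delta u) f y *~ rel_coef Q.+1 k.
Proof.
have := newton_forward u Q.+1 f y; rewrite uQ addr0 big_ord_recl big_ord_recr /=.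
rewrite bin0 binn !mulr1n big_ord_recl /= mulr0z add0r => E.
by apply/esym/addr0_eq/(addrI (f y)); rewrite addr0; exact/esym/E.
Qed.

Lemma sum_iter_Delta_shift (c : nat -> int) f y :
  \sum_(k < Q.+1) iter k (Delta u) (Delta u f) y *~ c k =
  \sum_(k < Q.+1) iter k (Delta u) f y *~ shift_coef Q.+1 c k.
Proof.
rewrite big_ord_recr /= -iterSr iter_Delta_order mulNrz mulrz_suml.
rewrite [RHS]big_ord_recl /= /shift_coef /= mulr0 subrr mulr0z add0r.
under [RHS]eq_bigr => i _ do rewrite mulrzBr.
rewrite sumrB; congr (_ - _); first by apply: eq_bigr => i _; rewrite -iterSr.
rewrite big_ord_recl /= mulr0z mul0rz add0r.
by apply: eq_bigr => i _; rewrite -mulrzA mulrC.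
Qed.

Lemma iter_Delta_pow_coef n f y :
  iter n (Delta u) f y =
  \sum_(k < Q.+1) iter k (Delta u) f y *~ pow_coef Q.+1 n k.
Proof.
elim: n f => [|n IH] f.
  by rewrite big_ord_recl /= mulr1z big1 ?addr0.
by rewrite iterSr IH sum_iter_Delta_shift.
Qed.

End CyclicDifferences.

Lemma PoszX (m k : nat) : (m ^ k)%N%:Z = m%:Z ^+ k.
Proof. by rewrite -!natz natrX. Qed.

Lemma dvdz_exp_mul (P : int) e b x y :
  ((b < e)%N -> (P ^+ (e - b) %| x)%Z) -> (P ^+ b %| y)%Z -> (P ^+ e %| x * y)%Z.
Proof.
case: (ltnP b e) => [be|eb] Px Py.
  by rewrite -(subnK (ltnW be)) exprD dvdz_mul ?Px.
by apply: dvdz_mull; apply: dvdz_trans Py; apply: dvdz_exp2l.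
Qed.

Section WeightFiltration.
Variables (p q q' phi : nat).
Hypotheses (q_split : q = (phi + q')%N) (q'_le_phi : (q' <= phi)%N) (q'_gt0 : (0 < q')%N).
Hypothesis p_dvd_bin : forall k, (0 < k < q)%N -> (p %| 'C(q, k))%N.
Hypothesis p2_dvd_bin : forall k, (0 < k < q')%N -> (p ^ 2 %| 'C(q, k))%N.

(* [c] is a combination of monomials p^e t^k of weight e * phi + k >= n, i.e.
   p^e divides c k whenever (e - 1) * phi + k < n (written without truncated
   subtraction). *)
Definition weight_ge (n : nat) (c : nat -> int) : Prop :=
  forall k e, (k < q)%N -> (e * phi + k < n + phi)%N -> (p%:Z ^+ e %| c k)%Z.

Lemma weight_ge0 c : weight_ge 0 c.
Proof. by move=> k [|e] //= _; rewrite mulSn; lia. Qed.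

Lemma eq_weight_ge n c d :
  (forall k, (k < q)%N -> c k = d k) -> weight_ge n c -> weight_ge n d.
Proof. by move=> cd wc k e kq ke; rewrite -cd // wc. Qed.

Lemma weight_geB n c d : weight_ge n c -> weight_ge n d -> weight_ge n (c \- d).
Proof. by move=> wc wd k e kq ke; rewrite rpredB ?wc ?wd. Qed.

Lemma weight_ge_scale n e z c : (p%:Z ^+ e %| z)%Z -> weight_ge n c ->
  weight_ge (e * phi + n) (z \*o c).
Proof.
move=> pz wc k a kq ka; rewrite /= mulrC; apply: dvdz_exp_mul pz => ea.
have := leq_mul (ltnW ea) (leqnn phi) => le.
by apply: wc; rewrite // mulnBl; lia.
Qed.

Lemma rel_coef_dvd k : (k < q)%N -> (p%:Z %| rel_coef q k)%Z.
Proof. by case: k => [|k] kq //=; rewrite dvdzE p_dvd_bin. Qed.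

Lemma rel_coef_dvd2 k : (k < q')%N -> (p%:Z ^+ 2 %| rel_coef q k)%Z.
Proof. by case: k => [|k] kq //=; rewrite -PoszX dvdzE p2_dvd_bin. Qed.

Lemma weight_ge_shift n c : weight_ge n c -> weight_ge n.+1 (shift_coef q c).
Proof.
move=> wc k e kq ke; apply: rpredB.
  by case: k kq ke => [|k] kq ke; rewrite ?dvdz0 // wc //; lia.
case: (ltnP k q') => [kq'|q'k].
  apply: dvdz_exp_mul (rel_coef_dvd2 kq') => e2.
  have := leq_mul (ltnW e2) (leqnn phi) => le.
  by apply: wc; rewrite ?mulnBl; lia.
apply: (@dvdz_exp_mul _ _ 1) => [e1|]; last by rewrite expr1 rel_coef_dvd.
have := leq_mul (ltnW e1) (leqnn phi) => le.
by apply: wc; rewrite ?mulnBl; lia.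
Qed.

Local Notation Cq := ('C(q, q')%:Z).

Let q'_lt_q : (q' < q)%N.
Proof. lia. Qed.

Lemma weight_ge_rel : weight_ge q.+1 (rel_coef q \- Cq \*o unit_coef q').
Proof.
move=> k e kq ke; rewrite /= /unit_coef.
case: (ltngtP k q') => [kq'|q'k|->]; last first.
- by rewrite mulr1 -(prednK q'_gt0) subrr dvdz0.
- rewrite mulr0 subr0; apply: dvdz_trans (rel_coef_dvd kq).
  rewrite -[X in (_ %| X)%Z]expr1 dvdz_exp2l // leqNgt; apply/negP => e2.
  have := leq_mul e2 (leqnn phi); lia.
rewrite mulr0 subr0; case: k kq ke kq' => [|k] kq ke kq'; first exact: dvdz0.
apply: dvdz_trans (rel_coef_dvd2 kq'); rewrite dvdz_exp2l // leqNgt.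
by apply/negP => e3; have := leq_mul e3 (leqnn phi); lia.
Qed.

Lemma pow_coef_weight n : weight_ge n (pow_coef q n).
Proof. by elim: n => [|n IH]; [exact: weight_ge0 | exact: weight_ge_shift]. Qed.

Definition pow_coef_lead (e r : nat) : Prop :=
  weight_ge (e * phi + r).+1 (pow_coef q (e * phi + r) \- (- Cq) ^+ e \*o unit_coef r).

Lemma pow_coef_lead0 : pow_coef_lead 0 q'.
Proof.
move=> k e kq _; rewrite /= pow_coef_small ?q'_lt_q //.
by rewrite expr0 mul1r subrr dvdz0.
Qed.

Lemma pow_coef_leadS e r : (r.+1 < q)%N ->
  pow_coef_lead e r -> pow_coef_lead e r.+1.
Proof.
move=> rq L; rewrite /pow_coef_lead addnS.
apply: eq_weight_ge (weight_ge_shift L) => k kq.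
by rewrite shift_coefB shift_unit_coef.
Qed.

Lemma pow_coef_lead_wrap e :
  pow_coef_lead e q.-1 -> pow_coef_lead e.+1 q'.
Proof.
move=> L; set n := (e * phi + q.-1)%N.
have pC : (p%:Z ^+ e %| (- Cq) ^+ e)%Z.
  by apply: dvdz_exp2r; rewrite rpredN dvdzE p_dvd_bin // q'_gt0 q'_lt_q.
have W := weight_ge_scale pC weight_ge_rel.
have nE : (e * phi + q.+1 = n.+2)%N by rewrite /n; lia.
rewrite nE in W.
rewrite /pow_coef_lead; have -> : (e.+1 * phi + q' = n.+1)%N by rewrite /n mulSn; lia.
apply: eq_weight_ge (weight_geB (weight_ge_shift L) W) => k kq.
by rewrite /= shift_coefB shift_unit_coef_last // exprSr; ring.
Qed.

Lemma pow_coef_lead_all e r : (q' <= r < q)%N -> pow_coef_lead e r.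
Proof.
have row f d : pow_coef_lead f q' -> (q' + d < q)%N -> pow_coef_lead f (q' + d).
  move=> L; elim: d => [|d IH] qd; first by rewrite addn0.
  by rewrite addnS; apply: pow_coef_leadS; [lia | apply: IH; lia].
have col : pow_coef_lead e q'.
  elim: e => [|e IH]; first exact: pow_coef_lead0.
  apply: pow_coef_lead_wrap; have := row e (q.-1 - q')%N IH.
  by rewrite subnKC; [apply; lia | lia].
by move=> /andP[q'r rq]; rewrite -(subnKC q'r); apply: row col _; lia.
Qed.

End WeightFiltration.

Section TorsionGroup.
Variable B : zmodType.

Lemma mulrz_dvd_eq0 m (x : B) z :
  (forall b : B, b *+ m = 0) -> (m%:Z %| z)%Z -> x *~ z = 0.
Proof. by move=> mB /divzK <-; rewrite mulrzA -pmulrn mB. Qed.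

Lemma coprime_mulrn_eq0 m w (x : B) : (0 < m)%N ->
  (forall b : B, b *+ m = 0) -> coprime m w -> x *+ w = 0 -> x = 0.
Proof.
move=> m_gt0 mB mw xw; have [a _ /divnK] := Bezoutl w m_gt0.
rewrite (eqP mw) => Em; have := mB (x *+ ((1 + a * w) %/ m)%N).
by rewrite -mulrnA Em mulrnDr mulr1n [(a * w)%N]mulnC mulrnA xw mul0rn addr0.
Qed.

Lemma has_exponent_witness n m : has_exponent B n -> (0 < m < n)%N ->
  exists b : B, b *+ m != 0.
Proof.
move=> [_ [_ nmin]] /andP[m_gt0 mn]; apply: NNPP => noB.
suff : (n <= m)%N by rewrite leqNgt mn.
apply: nmin => // b.
by apply/eqP/negPn/negP => bm; apply: noB; exists b.
Qed.

Lemma mulrz_prime_power_neq0 p e w (b : B) : prime p -> coprime p w ->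
  (forall x : B, x *+ p ^ e.+1 = 0) -> b *+ p ^ e != 0 ->
  b *~ (- (p * w)%N%:Z) ^+ e != 0.
Proof.
move=> p_pr pw pB bp; rewrite exprNn -signr_odd mulrzA -PoszX -pmulrn expnMn.
have bpw : b *+ (p ^ e * w ^ e) != 0.
  rewrite mulrnA; apply: contra bp => /eqP /(coprime_mulrn_eq0 _ pB) -> //.
  - by rewrite expn_gt0 prime_gt0.
  - exact/coprimeXl/coprimeXr.
by case: (odd e); rewrite ?mulr1z // mulrN1z mulNrn oppr_eq0.
Qed.

End TorsionGroup.

Section PrimePowerCyclicGroup.
Variables (p alpha beta : nat) (B : zmodType).
Hypotheses (p_pr : prime p) (alpha_gt0 : (0 < alpha)%N) (beta_gt0 : (0 < beta)%N).
Hypothesis pB : forall b : B, b *+ p ^ beta = 0.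

Local Notation q := (p ^ alpha)%N.
Local Notation q' := (p ^ (alpha - 1))%N.
Local Notation phi := ((p - 1) * p ^ (alpha - 1))%N.
Local Notation N := (((beta * (p - 1) + 1) * p ^ (alpha - 1)) - 1)%N.

Let q'_gt0 : (0 < q')%N.
Proof. by rewrite expn_gt0 prime_gt0. Qed.

Let q_split : q = (phi + q')%N.
Proof.
rewrite -[in LHS](subnK alpha_gt0) addn1 expnS.
by rewrite mulnBl mul1n subnK // leq_pmull ?prime_gt0.
Qed.

Let q'_le_phi : (q' <= phi)%N.
Proof. by rewrite leq_pmull // subn_gt0 prime_gt1. Qed.

Let q_gt1 : (1 < q)%N.
Proof. lia. Qed.

Lemma Zp_generated_by_one (a : 'Z_q) : exists m, a = 1 *+ m.
Proof. by exists a; rewrite natr_Zp. Qed.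

Lemma Zp_one_order : (1 : 'Z_q) *+ q.-1.+1 = 0.
Proof. by rewrite prednK ?pchar_Zp //; lia. Qed.

Let N_succE : N.+1 = (beta * phi + q')%N.
Proof.
rewrite subn1 prednK; first by rewrite mulnDl mul1n mulnA.
by rewrite muln_gt0 addn1 q'_gt0.
Qed.

Let N_E : N = (beta.-1 * phi + q.-1)%N.
Proof.
have bE : (beta * phi = beta.-1 * phi + phi)%N by rewrite -mulSnr prednK.
by apply: succn_inj; rewrite N_succE -addnS prednK; lia.
Qed.

Let p_dvd_bin := @prime_dvd_bin_exp p alpha p_pr.
Let p2_dvd_bin := @prime_sq_dvd_bin_exp p alpha p_pr.

Lemma iter_Delta_Zp n (f : 'Z_q -> B) y :
  iter n (Delta 1) f y = \sum_(k < q) iter k (Delta 1) f y *~ pow_coef q n k.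
Proof. by rewrite (iter_Delta_pow_coef Zp_one_order) prednK //; lia. Qed.

Lemma Zp_vanishes_at (f : 'Z_q -> B) : vanishes_at f N.
Proof.
move=> s; rewrite N_succE => sz.
apply: (iterDelta_generated (@Zp_generated_by_one)) => y.
rewrite iter_Delta_Zp big1 // => k _; apply: mulrz_dvd_eq0 pB _.
rewrite PoszX sz (pow_coef_weight q_split q'_le_phi q'_gt0 p_dvd_bin p2_dvd_bin) //.
by have := ltn_ord k; lia.
Qed.

Lemma pow_coef_top :
  (p%:Z ^+ beta %| pow_coef q N q.-1 - (- 'C(q, q')%:Z) ^+ beta.-1)%Z.
Proof.
have L := pow_coef_lead_all q_split q'_le_phi q'_gt0 p_dvd_bin p2_dvd_bin
  (e := beta.-1) (r := q.-1).
have bE : (beta * phi = beta.-1 * phi + phi)%N by rewrite -mulSnr prednK.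
by have := L _ q.-1 beta; rewrite N_E /= /unit_coef eqxx mulr1; apply; lia.
Qed.

Lemma Zp_indicator_fdeg (b : B) : b *+ p ^ beta.-1 != 0 ->
  fdeg_is (fun x : 'Z_q => if x == q.-1%:R then b else 0) (Fin N).
Proof.
move=> bp; set f0 := fun x => _.
apply: (fdeg_is_Fin (Zp_vanishes_at f0) (size_nseq N 1) (x := 0)).
rewrite iterDelta_nseq.
have f0_init j : (j < q.-1)%N -> f0 (0 + 1 *+ j) = 0.
  move=> jq; rewrite /f0 add0r; case: eqP => // /(congr1 val).
  by rewrite /= !val_Zp_nat // !modn_small //; lia.
have [f0_low f0_top] := iter_Delta_first f0_init.
rewrite (iter_Delta_pow_coef Zp_one_order) big_ord_recr /= big1 ?add0r; last first.
  by move=> k _; rewrite f0_low ?mul0rz.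
rewrite f0_top /f0 add0r eqxx prednK; last lia.
rewrite -[pow_coef _ _ _](subrK ((- 'C(q, q')%:Z) ^+ beta.-1)) mulrzDr.
rewrite (mulrz_dvd_eq0 _ pB) ?PoszX ?pow_coef_top // add0r.
rewrite bin_exp_exp_pred //; apply: mulrz_prime_power_neq0 => //.
- by rewrite prime_coprime // prime_ndvd_bin_exp_pred //; lia.
- by rewrite prednK.
Qed.

End PrimePowerCyclicGroup.

Local Close Scope ring_scope.
Unset Implicit Arguments.

Theorem theorem4 (p alpha beta : nat) (B : zmodType) :
  prime p -> (1 <= alpha)%N -> (1 <= beta)%N -> has_exponent B (p ^ beta) ->
  delta_is ('Z_(p ^ alpha) : zmodType) B
    (Fin (((beta * (p - 1) + 1) * p ^ (alpha - 1)) - 1)).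
Proof.
move=> p_pr alpha_gt0 beta_gt0 expB; have [_ [pB _]] := expB.
have [b bp] : exists b : B, (b *+ p ^ beta.-1 != 0)%R.
  apply: has_exponent_witness expB _.
  by rewrite expn_gt0 prime_gt0 //= ltn_exp2l ?prime_gt1 // ltn_predL.
exact: delta_is_Fin (Zp_vanishes_at p_pr alpha_gt0 beta_gt0 pB)
                    (Zp_indicator_fdeg p_pr alpha_gt0 beta_gt0 pB bp).
Qed.
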